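(* Let $G$ be a finite group acting transitively on a finite set $X$, and let $\mathscr{A}$ be the algebra of complex $X\times X$ matrices $M$ with $M_{g\cdot x,g\cdot y}=M_{x,y}$ for all $g\in G$, $x,y\in X$. Let $\mathcal{G}\in\mathscr{A}$ and let $\Phi=\{\phi_x\}_{x\in X}$ be a family of vectors (spanning a Hilbert space $\mathcal{H}$) whose Gram matrix $[\langle\phi_y,\phi_x\rangle]_{x,y}$ equals $\mathcal{G}$. Then $\Phi$ is a tight frame for $\mathcal{H}$ if and only if any (equivalently, every) projective reduction of $\Phi$ is a tight frame for $\mathcal{H}$.
   Context: For a family $\Phi=\{\phi_x\}_{x\in X}$, $x\sim y$ means $\phi_y=\alpha\phi_x$ for some unimodular $\alpha$; a projective reduction of $\Phi$ consists of one vector $\phi_x$ from each $\sim$-equivalence class. A family is a tight frame for $\mathcal{H}$ if $\sum_x|\langle\psi,\phi_x\rangle|^2=A\|\psi\|^2$ for all $\psi\in\mathcal{H}$ and some constant $A>0$. *)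

(* Complex scalars: an arbitrary numClosedFieldType C
   (e.g. algC), with conjugation z^*. *)
From HB Require Import structures.
From mathcomp Require Import all_boot all_order all_algebra all_fingroup.
Set Implicit Arguments. Unset Strict Implicit. Unset Printing Implicit Defensive.
Import Order.TTheory GRing.Theory Num.Theory.
Local Open Scope ring_scope.

Definition ip (C : numClosedFieldType) (n : nat) (u v : 'rV[C]_n) : C :=
  \sum_(i < n) u 0 i * (v 0 i)^*.

Definition gram (C : numClosedFieldType) (X : finType) (n : nat)
  (phi : X -> 'rV[C]_n) (x y : X) : C := ip (phi y) (phi x).

Definition invariant_mx (C : numClosedFieldType) (gT : finGroupType)
  (X : finType) (G : {set gT}) (to : {action gT &-> X}) (M : X -> X -> C) : Prop :=
  forall g x y, g \in G -> M (to x g) (to y g) = M x y.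

Definition in_span (C : numClosedFieldType) (X : finType) (n : nat)
  (phi : X -> 'rV[C]_n) (psi : 'rV[C]_n) : Prop :=
  exists c : X -> C, psi = \sum_(x : X) c x *: phi x.

Definition tight_frame_on (C : numClosedFieldType) (X : finType) (n : nat)
  (phi : X -> 'rV[C]_n) (S : {set X}) : Prop :=
  exists A : C, 0 < A /\
    forall psi, in_span phi psi ->
      \sum_(x in S) `|ip psi (phi x)| ^+ 2 = A * ip psi psi.

Definition proj_equiv (C : numClosedFieldType) (X : finType) (n : nat)
  (phi : X -> 'rV[C]_n) (x y : X) : Prop :=
  exists alpha : C, `|alpha| = 1 /\ phi y = alpha *: phi x.

Definition proj_reduction (C : numClosedFieldType) (X : finType) (n : nat)
  (phi : X -> 'rV[C]_n) (R : {set X}) : Prop :=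
  (forall x, exists2 y, y \in R & proj_equiv phi x y) /\
  (forall y z, y \in R -> z \in R -> proj_equiv phi y z -> y = z).

(* The Gram matrix determines which vectors of the family are unimodular
   multiples of one another, so a G-invariant Gram matrix makes G permute the
   projective classes; transitivity then forces all classes to have the same
   size k.  The frame sum over X is therefore k times the frame sum over any
   projective reduction, and tightness transfers in both directions. *)
From HB Require Import structures.
From mathcomp Require Import all_boot all_order all_algebra all_fingroup.
From Stdlib Require Import ClassicalEpsilon.
Import Order.TTheory GRing.Theory Num.Theory.
Local Open Scope ring_scope.
Set Implicit Arguments. Unset Strict Implicit.

Section InnerProduct.
Variables (C : numClosedFieldType) (n : nat).
Implicit Types u v w : 'rV[C]_n.

Lemma ip0l w : ip 0 w = 0.
Proof. by rewrite /ip big1 // => i _; rewrite mxE mul0r. Qed.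

Lemma ipBl u v w : ip (u - v) w = ip u w - ip v w.
Proof.
by rewrite /ip -sumrB; apply: eq_bigr => i _; rewrite !mxE mulrBl.
Qed.

Lemma ipZl a u w : ip (a *: u) w = a * ip u w.
Proof. by rewrite /ip mulr_sumr; apply: eq_bigr => i _; rewrite mxE mulrA. Qed.

Lemma ipBr u v w : ip u (v - w) = ip u v - ip u w.
Proof.
by rewrite /ip -sumrB; apply: eq_bigr => i _; rewrite !mxE rmorphB mulrBr.
Qed.

Lemma ipZr a u v : ip u (a *: v) = a^* * ip u v.
Proof.
by rewrite /ip mulr_sumr; apply: eq_bigr => i _; rewrite mxE rmorphM mulrCA.
Qed.

Lemma ip_eq0 u : ip u u = 0 -> u = 0.
Proof.
move=> uu0; have norm_sum0 : \sum_(i < n) `|u 0 i| ^+ 2 = 0.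
  by rewrite -[RHS]uu0 /ip; apply: eq_bigr => i _; rewrite normCK.
have coord0 := psumr_eq0P (fun i _ => exprn_ge0 2 (normr_ge0 (u 0 i))) norm_sum0.
apply/rowP => i; rewrite mxE.
have /eqP := coord0 i isT.
by rewrite expf_eq0 normr_eq0 => /andP[_ /eqP].
Qed.

End InnerProduct.

Section ProjectiveClasses.
Variables (C : numClosedFieldType) (n : nat) (X : finType).
Variable phi : X -> 'rV[C]_n.

Lemma proj_equiv_refl x : proj_equiv phi x x.
Proof. by exists 1; rewrite normr1 scale1r. Qed.

Lemma proj_equiv_sym x y : proj_equiv phi x y -> proj_equiv phi y x.
Proof.
case=> a [a1 phiy]; have a0 : a != 0 by rewrite -normr_eq0 a1 oner_eq0.
exists a^-1; split; first by rewrite normfV a1 invr1.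
by rewrite phiy scalerA mulVf // scale1r.
Qed.

Lemma proj_equiv_trans x y z :
  proj_equiv phi x y -> proj_equiv phi y z -> proj_equiv phi x z.
Proof.
case=> a [a1 phiy] [b [b1 phiz]]; exists (b * a).
by rewrite normrM a1 b1 mulr1 phiz phiy scalerA.
Qed.

Lemma proj_equiv_frame_coef psi x y : proj_equiv phi x y ->
  `|ip psi (phi x)| ^+ 2 = `|ip psi (phi y)| ^+ 2.
Proof. by case=> a [a1 ->]; rewrite ipZr normrM norm_conjC a1 mul1r. Qed.

(* Whether phi y is a unimodular multiple of phi x is read off the Gram
   matrix, since it amounts to ip (phi y - a phi x) (phi y - a phi x) = 0. *)
Lemma proj_equiv_gram_morph (f : X -> X) x y :
  (forall u v, gram phi (f u) (f v) = gram phi u v) ->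
  proj_equiv phi x y -> proj_equiv phi (f x) (f y).
Proof.
move=> fgram [a [a1 phiy]]; exists a; split=> //.
apply/eqP; rewrite -subr_eq0; apply/eqP/ip_eq0.
have ipf u v : ip (phi (f u)) (phi (f v)) = ip (phi u) (phi v) by apply: fgram.
have : ip (phi y - a *: phi x) (phi y - a *: phi x) = 0.
  by rewrite -phiy subrr ip0l.
by rewrite !(ipBl, ipBr, ipZl, ipZr) !ipf.
Qed.

Definition proj_equivb x y : bool :=
  if excluded_middle_informative (proj_equiv phi x y) then true else false.

Lemma proj_equivP x y : reflect (proj_equiv phi x y) (proj_equivb x y).
Proof. by rewrite /proj_equivb; case: excluded_middle_informative; constructor. Qed.

Definition proj_class x := [set y | proj_equivb x y].

Lemma proj_reduction_exists : exists R, proj_reduction phi R.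
Proof.
pose rep x := [arg min_(y < x | proj_equivb x y) (enum_rank y : nat)].
have repP x : proj_equiv phi x (rep x) /\
    forall z, proj_equiv phi x z -> (enum_rank (rep x) <= enum_rank z)%N.
  rewrite /rep; case: arg_minnP => [|y /proj_equivP xy ymin].
    exact/proj_equivP/proj_equiv_refl.
  by split=> // z /proj_equivP; apply: ymin.
exists [set rep x | x : X]; split=> [x|].
  by exists (rep x); [apply: imset_f | have [] := repP x].
move=> _ _ /imsetP[a _ ->] /imsetP[b _ ->] ab.
have [a_ra min_a] := repP a; have [b_rb min_b] := repP b.
apply/enum_rank_inj/val_inj/eqP; rewrite eqn_leq.
rewrite min_a ?min_b //; first exact: proj_equiv_trans b_rb (proj_equiv_sym ab).
exact: proj_equiv_trans a_ra ab.
Qed.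

Lemma sum_proj_reduction (R : {set X}) (F : X -> C) (k : nat) :
  proj_reduction phi R ->
  (forall x y, proj_equiv phi x y -> F x = F y) ->
  (forall y, #|proj_class y| = k) ->
  \sum_x F x = (\sum_(y in R) F y) *+ k.
Proof.
move=> [R_cover R_uniq] Fclass cardk.
have split_class x : F x = \sum_(y in R | proj_equivb y x) F x.
  have [y0 y0R xy0] := R_cover x.
  rewrite (big_pred1 y0) // => y /=; apply/idP/eqP => [/andP[yR /proj_equivP yx]|->].
    exact: R_uniq yR y0R (proj_equiv_trans yx xy0).
  by rewrite y0R; apply/proj_equivP/proj_equiv_sym.
rewrite (eq_bigr _ (fun x _ => split_class x)).
rewrite (exchange_big_dep (mem R)) /=; last by move=> x y _ /andP[].
rewrite -sumrMnl; apply: eq_bigr => y yR.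
rewrite (eq_bigr (fun _ => F y)) => [|x /andP[_ /proj_equivP yx]]; last first.
  exact/esym/Fclass.
rewrite sumr_const -(cardk y); congr (_ *+ _).
by apply: eq_card => x; rewrite !inE yR.
Qed.

Lemma tight_frame_on_proj_reduction (R : {set X}) (k : nat) :
  (0 < k)%N -> proj_reduction phi R -> (forall y, #|proj_class y| = k) ->
  tight_frame_on phi [set: X] <-> tight_frame_on phi R.
Proof.
move=> k_gt0 redR cardk.
have k_pos : 0 < k%:R :> C by rewrite ltr0n.
have frame_sum psi :
    \sum_(x in [set: X]) `|ip psi (phi x)| ^+ 2
    = k%:R * \sum_(y in R) `|ip psi (phi y)| ^+ 2.
  rewrite (eq_bigl predT) => [|x]; last by rewrite inE.
  rewrite mulr_natl; apply: sum_proj_reduction cardk => // x y.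
  exact: proj_equiv_frame_coef.
split=> -[A [A_gt0 tightA]].
  exists (A / k%:R); split=> [|psi /tightA]; first by rewrite divr_gt0.
  by rewrite frame_sum mulrAC => <-; rewrite [RHS]mulrC mulKf ?lt0r_neq0.
exists (k%:R * A); split=> [|psi /tightA]; first by rewrite mulr_gt0.
by rewrite frame_sum -mulrA => ->.
Qed.

End ProjectiveClasses.

Section TransitiveAction.
Variables (C : numClosedFieldType) (gT : finGroupType) (G : {group gT}).
Variables (X : finType) (to : {action gT &-> X}) (n : nat).
Variable phi : X -> 'rV[C]_n.
Hypothesis Gtrans : [transitive G, on [set: X] | to].
Hypothesis Ggram : invariant_mx G to (gram phi).

Lemma card_proj_class_act_le g x : g \in G ->
  (#|proj_class phi x| <= #|proj_class phi (to x g)|)%N.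
Proof.
move=> Gg; rewrite -(card_imset _ (act_inj to g)); apply: subset_leq_card.
apply/subsetP => z /imsetP[y]; rewrite !inE => /proj_equivP xy ->.
apply/proj_equivP; apply: (proj_equiv_gram_morph (f := to^~ g)) xy => u v.
exact: Ggram.
Qed.

Lemma card_proj_class_act g x : g \in G ->
  #|proj_class phi (to x g)| = #|proj_class phi x|.
Proof.
move=> Gg; apply/eqP; rewrite eqn_leq card_proj_class_act_le //.
by rewrite -{2}(actK to g x) card_proj_class_act_le ?groupV.
Qed.

Lemma card_proj_class_const :
  exists2 k, (0 < k)%N & forall y, #|proj_class phi y| = k.
Proof.
have [X0 | [x0 _]] := set_0Vmem [set: X].
  by exists 1%N => // y; have := in_setT y; rewrite X0 inE.
exists #|proj_class phi x0|.
  by apply/card_gt0P; exists x0; rewrite inE; apply/proj_equivP/proj_equiv_refl.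
move=> y; have : y \in orbit to G x0 by rewrite (atransP Gtrans) ?inE.
by case/orbitP => g Gg <-; apply: card_proj_class_act.
Qed.

End TransitiveAction.

Theorem corollary3p19 (C : numClosedFieldType) (gT : finGroupType)
  (G : {group gT}) (X : finType) (to : {action gT &-> X}) (n : nat)
  (phi : X -> 'rV[C]_n)
  (Htrans : [transitive G, on [set: X] | to])
  (Hgram : invariant_mx G to (gram phi)) :
  (tight_frame_on phi [set: X] <->
     exists R, proj_reduction phi R /\ tight_frame_on phi R) /\
  (tight_frame_on phi [set: X] <->
     forall R, proj_reduction phi R -> tight_frame_on phi R).
Proof.
have [k k_gt0 cardk] := card_proj_class_const Htrans Hgram.
have tightR R := @tight_frame_on_proj_reduction _ _ _ phi R k k_gt0 ^~ cardk.
have [R0 redR0] := proj_reduction_exists phi.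
split; split.
- by move=> tightX; exists R0; split=> //; apply/(tightR R0 redR0).
- by case=> R [redR /(tightR R redR)].
- by move=> tightX R redR; apply/(tightR R redR).
- by move=> tightAll; apply/(tightR R0 redR0)/tightAll.
Qed.
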